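(* Let $i\in\{0,\dots,N\}$, $V_i=\mathrm{span}(v_1,\dots,v_i)$, and let $x=w+z$ with $w\in V_i$, $z\in V_i^\perp$, $z\neq 0$, and $|v_j\cdot z|<\kappa\|z\|$ for every $j>i$. Then \[ \mathcal W(x)=\sup_{a,b\ge 0:\ a^2+b^2\in[\delta^2,1]}\left\{-2\alpha(a^2+b^2)^{\frac{1+\alpha}{2}} + \frac{2(1+\alpha)}{(a^2+b^2)^{\frac{1-\alpha}{2}}}\Big(\sup_{y\in \tilde\Omega_{a,b}} y\cdot w + b\|z\|\Big)\right\}, \] where $\tilde\Omega_{a,b}=\{y\in V_i: \|y\|=a,\ |v_j\cdot y|<\kappa\sqrt{a^2+b^2}\ \text{for all } j\in[i]\}$, with the convention that the supremum of an empty set is $-\infty$. In particular, this value does not depend on $v_{i+1},\dots,v_N$.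
   Context: Let $v_1,\dots,v_N$ be an orthonormal family in $\mathbb{R}^d$. Let $\kappa>0$, $\delta\in(0,1)$, $\alpha>0$. Correlation cones: $C_i=\{x\ne 0: |v_i\cdot x|/\|x\|\ge \kappa\}$. Let $h(x)=2\|x\|^{1+\alpha}$, $\Omega=\{x\in\mathbb{R}^d: \|x\|\in[\delta,1],\ x\notin C_i \text{ for all } i\in[N]\}$, and wall function $\mathcal W(x)=\sup_{y\in\Omega}\{h(y)+\nabla h(y)\cdot(x-y)\}$. *)

From Stdlib Require Import Reals Lra ClassicalEpsilon.
Open Scope R_scope.

(* Vectors of R^d are represented by functions nat -> R; only the
   coordinates 0..d-1 are relevant. *)

Fixpoint dot (d : nat) (x y : nat -> R) : R :=
  match d with
  | O => 0
  | S d' => dot d' x y + x d' * y d'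
  end.

Definition norm (d : nat) (x : nat -> R) : R := sqrt (dot d x x).

Definition is_zero (d : nat) (x : nat -> R) : Prop :=
  forall k, (k < d)%nat -> x k = 0.

Definition orthonormal (d N : nat) (v : nat -> nat -> R) : Prop :=
  forall j l, (1 <= j <= N)%nat -> (1 <= l <= N)%nat ->
    dot d (v j) (v l) = if Nat.eqb j l then 1 else 0.

Fixpoint lincomb (i : nat) (c : nat -> R) (v : nat -> nat -> R) (k : nat) : R :=
  match i with
  | O => 0
  | S i' => lincomb i' c v k + c (S i') * v (S i') k
  end.

Definition in_span (d i : nat) (v : nat -> nat -> R) (y : nat -> R) : Prop :=
  exists c : nat -> R, forall k, (k < d)%nat -> y k = lincomb i c v k.

Definition in_perp (d i : nat) (v : nat -> nat -> R) (z : nat -> R) : Prop :=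
  forall u, in_span d i v u -> dot d u z = 0.

Definition cone (d : nat) (v : nat -> nat -> R) (kappa : R) (j : nat)
  (x : nat -> R) : Prop :=
  ~ is_zero d x /\ Rabs (dot d (v j) x) / norm d x >= kappa.

Definition h (d : nat) (alpha : R) (x : nat -> R) : R :=
  2 * Rpower (norm d x) (1 + alpha).

Definition Omega (d N : nat) (v : nat -> nat -> R) (kappa delta : R)
  (x : nat -> R) : Prop :=
  delta <= norm d x <= 1 /\
  forall j, (1 <= j <= N)%nat -> ~ cone d v kappa j x.

(* Extended reals, supremum of a set of extended reals (sup of empty = -oo) *)
Inductive Ebar : Type := Fin (r : R) | PInf | MInf.

Definition Ele (x y : Ebar) : Prop :=
  match x, y with
  | MInf, _ => True
  | _, PInf => True
  | Fin a, Fin b => a <= b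
  | _, _ => False
  end.

Definition is_esup (S : Ebar -> Prop) (e : Ebar) : Prop :=
  (forall x, S x -> Ele x e) /\
  (forall u, (forall x, S x -> Ele x u) -> Ele e u).

Definition Esup (S : Ebar -> Prop) : Ebar :=
  epsilon (inhabits MInf) (is_esup S).

Definition img {A : Type} (P : A -> Prop) (f : A -> R) : Ebar -> Prop :=
  fun e => exists y, P y /\ e = Fin (f y).

Definition Eadd (e : Ebar) (r : R) : Ebar :=
  match e with Fin s => Fin (s + r) | PInf => PInf | MInf => MInf end.

(* c * e, for c > 0 real *)
Definition Emulpos (c : R) (e : Ebar) : Ebar :=
  match e with Fin s => Fin (c * s) | PInf => PInf | MInf => MInf end.

Definition vadd (x y : nat -> R) : nat -> R := fun k => x k + y k.
Definition vsub (x y : nat -> R) : nat -> R := fun k => x k - y k.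
Definition vscal (t : R) (x : nat -> R) : nat -> R := fun k => t * x k.

(* Wall function: W(x) = sup_{y in Omega} { h(y) + grad h(y) . (x - y) },
   where grad h(y) . (x - y) is the directional derivative of h at y in
   direction x - y, i.e. the derivative at t = 0 of t |-> h(y + t (x - y)). *)
Definition Wall (d N : nat) (v : nat -> nat -> R) (kappa delta alpha : R)
  (x : nat -> R) : Ebar :=
  Esup (fun e => exists y D,
          Omega d N v kappa delta y /\
          derivable_pt_lim (fun t => h d alpha (vadd y (vscal t (vsub x y)))) 0 D /\
          e = Fin (h d alpha y + D)).

Definition Omega_tilde (d i : nat) (v : nat -> nat -> R) (kappa a b : R)
  (y : nat -> R) : Prop :=
  in_span d i v y /\ norm d y = a /\
  forall j, (1 <= j <= i)%nat -> Rabs (dot d (v j) y) < kappa * sqrt (a ^ 2 + b ^ 2).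

From Stdlib Require Import Reals Lra Lia ClassicalEpsilon Classical FunctionalExtensionality.
From Coquelicot Require Coquelicot.
Open Scope R_scope.

(* Since h(y) = 2|y|^(1+alpha) is (1+alpha)-homogeneous, its tangent plane at
   y in Omega, evaluated at x, equals c(r) (y.x) + k(r) with r = |y|^2 and
   explicit c(r) > 0, k(r) (Euler's identity); so W(x) is the supremum of
   these tangent values over y in Omega (Wall_as_sup).  Split y = yt + yp
   along V_i (+) V_i^perp and put a = |yt|, b = |yp|:
   - y.x = yt.w + yp.z <= yt.w + b|z| by Cauchy-Schwarz, and the cone
     conditions of y for j <= i say exactly that yt lies in tilde Omega_{a,b}
     (project_from_Omega);
   - conversely, for yt in tilde Omega_{a,b}, y = yt + (b/|z|) z is in Omega
     (the cone conditions for j > i follow from those of z) and attains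
     y.x = yt.w + b|z| (lift_to_Omega).
   Hence both sides are suprema of the same values; the inner supremum over
   tilde Omega_{a,b} is handled by the commutation of a positive affine map
   with suprema in the extended reals. *)

Lemma dot_ext d x x' y y' :
  (forall k, (k < d)%nat -> x k = x' k) -> (forall k, (k < d)%nat -> y k = y' k) ->
  dot d x y = dot d x' y'.
Proof.
induction d as [|d IH]; intros Hx Hy; simpl; [reflexivity|].
rewrite IH, Hx, Hy by (intros; auto with arith). reflexivity.
Qed.

Lemma dot_sym d x y : dot d x y = dot d y x.
Proof. induction d as [|d IH]; simpl; [reflexivity|]. rewrite IH; ring. Qed.

(* Linearity in the first argument, for a vector given coordinatewise as a
   linear combination; all the other linearity rules are instances. *)
Lemma dot_linear_l d x y y' z a b :
  (forall k, (k < d)%nat -> x k = a * y k + b * y' k) ->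
  dot d x z = a * dot d y z + b * dot d y' z.
Proof.
induction d as [|d IH]; intros H; simpl; [ring|].
rewrite IH, H by (intros; auto with arith). ring.
Qed.

Lemma dot_linear_r d x y y' z a b :
  (forall k, (k < d)%nat -> x k = a * y k + b * y' k) ->
  dot d z x = a * dot d z y + b * dot d z y'.
Proof.
intros H. rewrite !(dot_sym d z). now apply dot_linear_l.
Qed.

Lemma dot_add_l d p q r : dot d (vadd p q) r = dot d p r + dot d q r.
Proof. rewrite (dot_linear_l d _ p q r 1 1) by (intros; unfold vadd; ring). ring. Qed.

Lemma dot_add_r d p q r : dot d r (vadd p q) = dot d r p + dot d r q.
Proof. rewrite !(dot_sym d r). apply dot_add_l. Qed.

Lemma dot_sub_r d p q r : dot d r (vsub p q) = dot d r p - dot d r q.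
Proof. rewrite (dot_linear_r d _ p q r 1 (-1)) by (intros; unfold vsub; ring). ring. Qed.

Lemma dot_scal_l d t p r : dot d (vscal t p) r = t * dot d p r.
Proof. rewrite (dot_linear_l d _ p p r t 0) by (intros; unfold vscal; ring). ring. Qed.

Lemma dot_scal_r d t p r : dot d r (vscal t p) = t * dot d r p.
Proof. rewrite !(dot_sym d r). apply dot_scal_l. Qed.

Lemma dot_zero_l d x y : is_zero d x -> dot d x y = 0.
Proof. intros H. rewrite (dot_linear_l d x x x y 0 0) by (intros; rewrite H; auto; ring). ring. Qed.

Lemma dot_self_nonneg d x : 0 <= dot d x x.
Proof. induction d as [|d IH]; simpl; [lra|]. pose proof (Rle_0_sqr (x d)). unfold Rsqr in *. lra. Qed.

Lemma dot_self_eq0 d x : dot d x x = 0 -> is_zero d x.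
Proof.
induction d as [|d IH]; intros H k Hk; [lia|]. simpl in H.
pose proof (dot_self_nonneg d x). pose proof (Rle_0_sqr (x d)). unfold Rsqr in *.
destruct (Nat.eq_dec k d) as [->|Hne].
- apply Rsqr_0_uniq. unfold Rsqr. lra.
- apply IH; [lra|lia].
Qed.

Lemma norm_sq d x : norm d x * norm d x = dot d x x.
Proof. apply sqrt_sqrt, dot_self_nonneg. Qed.

Lemma norm_nonneg d x : 0 <= norm d x.
Proof. apply sqrt_pos. Qed.

Lemma norm_pos_iff d x : 0 < norm d x <-> ~ is_zero d x.
Proof.
pose proof (norm_sq d x). pose proof (norm_nonneg d x). split.
- intros Hp Hz. rewrite (dot_zero_l d x x Hz) in H. nra.
- intros Hz. destruct H0 as [|H0]; [assumption|].
  exfalso. apply Hz, dot_self_eq0. rewrite <- H, <- H0. ring.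
Qed.

(* Cauchy-Schwarz: expand |b x - a y|^2 >= 0 with a = |x|, b = |y|. *)
Lemma cauchy_schwarz d x y : dot d x y <= norm d x * norm d y.
Proof.
pose proof (norm_sq d x) as Hx. pose proof (norm_sq d y) as Hy.
destruct (classic (is_zero d x)) as [Zx|Zx].
{ rewrite dot_zero_l by exact Zx. pose proof (norm_nonneg d x). pose proof (norm_nonneg d y). nra. }
destruct (classic (is_zero d y)) as [Zy|Zy].
{ rewrite dot_sym, dot_zero_l by exact Zy. pose proof (norm_nonneg d x). pose proof (norm_nonneg d y). nra. }
apply norm_pos_iff in Zx. apply norm_pos_iff in Zy.
set (a := norm d x) in *. set (b := norm d y) in *.
pose proof (dot_self_nonneg d (fun k => b * x k + (-a) * y k)) as Hexp.
rewrite (dot_linear_l d _ x y _ b (-a)) in Hexp by reflexivity.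
rewrite (dot_linear_r d _ x y x b (-a)), (dot_linear_r d _ x y y b (-a)) in Hexp by reflexivity.
rewrite (dot_sym d y x), <- Hx, <- Hy in Hexp.
assert (Hab : 0 < 2 * (a * b)) by (apply Rmult_lt_0_compat; nra).
assert (Hkey : 2 * (a * b) * 0 <= 2 * (a * b) * (a * b - dot d x y)) by nra.
apply Rmult_le_reg_l in Hkey; lra.
Qed.

Lemma lincomb_succ i c v k :
  lincomb (S i) c v k = 1 * lincomb i c v k + c (S i) * v (S i) k.
Proof. simpl. ring. Qed.

Lemma dot_lincomb_orth d i c v u :
  (forall j, (1 <= j <= i)%nat -> dot d (v j) u = 0) -> dot d (lincomb i c v) u = 0.
Proof.
induction i as [|i IH]; intros H.
- now apply dot_zero_l.
- rewrite (dot_linear_l d _ (lincomb i c v) (v (S i)) _ 1 (c (S i)))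
    by (intros; apply lincomb_succ).
  rewrite IH, H; [ring | lia | intros j Hj; apply H; lia].
Qed.

Definition unit_coef (j : nat) : nat -> R := fun l => if Nat.eqb l j then 1 else 0.

Lemma lincomb_unit_coef i v j k : (1 <= j <= i)%nat -> lincomb i (unit_coef j) v k = v j k.
Proof.
assert (Hlow : forall m, (m < j)%nat -> lincomb m (unit_coef j) v k = 0).
{ induction m as [|m IH]; intros H; simpl; [reflexivity|].
  unfold unit_coef at 2. rewrite IH by lia.
  replace (Nat.eqb (S m) j) with false by (symmetry; apply Nat.eqb_neq; lia). ring. }
induction i as [|i IH]; intros H; simpl; [lia|].
unfold unit_coef at 2. destruct (Nat.eq_dec j (S i)) as [->|Hne].
- rewrite Nat.eqb_refl, Hlow by lia. ring.
- replace (Nat.eqb (S i) j) with false by (symmetry; apply Nat.eqb_neq; lia).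
  rewrite IH by lia. ring.
Qed.

Lemma basis_in_span d i v j : (1 <= j <= i)%nat -> in_span d i v (v j).
Proof. intros H. exists (unit_coef j). intros k _. symmetry. now apply lincomb_unit_coef. Qed.

Section Orthonormal.
Variables (d N : nat) (v : nat -> nat -> R).
Hypothesis Horth : orthonormal d N v.

Lemma dot_basis_lincomb_high i c j :
  (i < j <= N)%nat -> dot d (v j) (lincomb i c v) = 0.
Proof.
induction i as [|i IH]; intros Hj.
- rewrite dot_sym. now apply dot_zero_l.
- rewrite (dot_linear_r d _ (lincomb i c v) (v (S i)) _ 1 (c (S i)))
    by (intros; apply lincomb_succ).
  rewrite IH, Horth by lia.
  replace (Nat.eqb j (S i)) with false by (symmetry; apply Nat.eqb_neq; lia). ring.
Qed.

Lemma dot_basis_lincomb i c j :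
  (1 <= j <= i)%nat -> (i <= N)%nat -> dot d (v j) (lincomb i c v) = c j.
Proof.
induction i as [|i IH]; intros Hj HiN; [lia|].
rewrite (dot_linear_r d _ (lincomb i c v) (v (S i)) _ 1 (c (S i)))
  by (intros; apply lincomb_succ).
rewrite Horth by lia. destruct (Nat.eq_dec j (S i)) as [->|Hne].
- rewrite dot_basis_lincomb_high, Nat.eqb_refl by lia. ring.
- rewrite IH by lia.
  replace (Nat.eqb j (S i)) with false by (symmetry; apply Nat.eqb_neq; lia). ring.
Qed.

Lemma dot_basis_span_high i j y :
  in_span d i v y -> (i < j <= N)%nat -> dot d (v j) y = 0.
Proof.
intros [c Hc] Hj. rewrite (dot_ext d (v j) (v j) y (lincomb i c v)) by auto.
now apply dot_basis_lincomb_high.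
Qed.

Definition proj (i : nat) (y : nat -> R) : nat -> R :=
  lincomb i (fun j => dot d (v j) y) v.

Lemma proj_decomposition i y : (i <= N)%nat ->
  in_span d i v (proj i y) /\ in_perp d i v (vsub y (proj i y)).
Proof.
intros HiN. split.
- exists (fun j => dot d (v j) y). reflexivity.
- intros u [c Hc]. rewrite (dot_ext d u (lincomb i c v) _ _) by auto.
  apply dot_lincomb_orth. intros j Hj.
  rewrite dot_sub_r. unfold proj. rewrite dot_basis_lincomb by lia. ring.
Qed.

End Orthonormal.

Lemma pythagoras d p q : dot d p q = 0 ->
  dot d (vadd p q) (vadd p q) = dot d p p + dot d q q.
Proof. intros H. rewrite dot_add_l, !dot_add_r, (dot_sym d q p), H. ring. Qed.

Lemma Ele_refl x : Ele x x.
Proof. destruct x; simpl; auto; lra. Qed.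

Lemma Ele_trans x y z : Ele x y -> Ele y z -> Ele x z.
Proof. destruct x, y, z; simpl; intros; try contradiction; auto; lra. Qed.

Lemma Ele_antisym x y : Ele x y -> Ele y x -> x = y.
Proof. destruct x, y; simpl; intros; try contradiction; auto. f_equal; lra. Qed.

(* Every set of extended reals has a supremum (completeness of R). *)
Lemma is_esup_exists (S : Ebar -> Prop) : exists e, is_esup S e.
Proof.
destruct (classic (S PInf)) as [HP|HP].
{ exists PInf. split; [intros [] _; simpl; auto|]. intros u Hu. now apply Hu. }
set (T := fun r => S (Fin r)).
destruct (classic (exists r, T r)) as [[r0 Hr0]|HT].
- destruct (classic (bound T)) as [Hb|Hb].
  + destruct (completeness T Hb (ex_intro _ r0 Hr0)) as [l [Hl1 Hl2]].
    exists (Fin l). split.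
    * intros [r| |] Hx; simpl; [now apply Hl1 | exact (HP Hx) | exact I].
    * intros [U| |] Hu; simpl; auto.
      -- apply Hl2. intros r Hr. exact (Hu (Fin r) Hr).
      -- exact (Hu (Fin r0) Hr0).
  + exists PInf. split; [intros [] _; simpl; auto|].
    intros [U| |] Hu; simpl; auto.
    * apply Hb. exists U. intros r Hr. exact (Hu (Fin r) Hr).
    * exact (Hu (Fin r0) Hr0).
- exists MInf. split; [|intros; exact I].
  intros [r| |] Hx; simpl; auto. apply HT. now exists r.
Qed.

Lemma Esup_spec S : is_esup S (Esup S).
Proof.
destruct (is_esup_exists S) as [e He].
apply (epsilon_spec (inhabits MInf) (is_esup S)). now exists e.
Qed.

Lemma Esup_upper (S : Ebar -> Prop) e : S e -> Ele e (Esup S).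
Proof. apply (Esup_spec S). Qed.

Lemma Esup_least (S : Ebar -> Prop) u : (forall e, S e -> Ele e u) -> Ele (Esup S) u.
Proof. apply (Esup_spec S). Qed.

Lemma Esup_ext (A B : Ebar -> Prop) : (forall e, A e <-> B e) -> Esup A = Esup B.
Proof.
intros H. apply Ele_antisym; apply Esup_least; intros e He.
- apply Esup_upper. now apply H.
- apply Esup_upper. now apply H.
Qed.

(* The affine map e |-> c (e + beta) + k, with c > 0, commutes with the
   supremum of a set of reals.  Below: it is an upper bound, and the least one. *)
Lemma Esup_affine_upper {T} (P : T -> Prop) f c beta k y : 0 < c -> P y ->
  Ele (Fin (c * (f y + beta) + k)) (Eadd (Emulpos c (Eadd (Esup (img P f)) beta)) k).
Proof.
intros Hc Hy. pose proof (Esup_upper (img P f) (Fin (f y)) (ex_intro _ y (conj Hy eq_refl))).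
destruct (Esup (img P f)); simpl in *; auto. nra.
Qed.

Lemma Esup_affine_least {T} (P : T -> Prop) f c beta k u : 0 < c ->
  (forall y, P y -> Ele (Fin (c * (f y + beta) + k)) u) ->
  Ele (Eadd (Emulpos c (Eadd (Esup (img P f)) beta)) k) u.
Proof.
intros Hc H. destruct u as [U| |].
- assert (Hs : Ele (Esup (img P f)) (Fin ((U - k) / c - beta))).
  { apply Esup_least. intros e [y [Hy ->]]. specialize (H y Hy). simpl in *.
    apply (Rmult_le_reg_l c); [assumption|].
    replace (c * ((U - k) / c - beta)) with (U - k - c * beta) by (field; lra). nra. }
  destruct (Esup (img P f)); simpl in *; auto.
  apply (Rmult_le_compat_l c) in Hs; [|lra].
  replace (c * ((U - k) / c - beta)) with (U - k - c * beta) in Hs by (field; lra). nra.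
- destruct (Esup (img P f)); simpl; auto.
- assert (Hs : Ele (Esup (img P f)) MInf).
  { apply Esup_least. intros e [y [Hy ->]]. exact (H y Hy). }
  destruct (Esup (img P f)); simpl in *; auto.
Qed.

(* Since h is (1+alpha)-homogeneous, the tangent
   plane of h at y, evaluated at x, only depends on r = |y|^2 and on y.x:
   it equals [tangent_value alpha r (y.x)], the affine function of y.x that
   appears in the theorem. *)

Definition tangent_slope (alpha r : R) : R := 2 * (1 + alpha) / Rpower r ((1 - alpha) / 2).

Definition tangent_offset (alpha r : R) : R := - 2 * alpha * Rpower r ((1 + alpha) / 2).

Definition tangent_value (alpha r p : R) : R := tangent_slope alpha r * p + tangent_offset alpha r.

Lemma tangent_slope_pos alpha r : 0 < alpha -> 0 < tangent_slope alpha r.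
Proof. intros Ha. apply Rdiv_lt_0_compat; [lra|apply exp_pos]. Qed.

Lemma Rpower_sq_half s e : 0 < s -> Rpower (s * s) (e / 2) = Rpower s e.
Proof.
intros Hs. replace (s * s) with (s ^ 2) by ring.
rewrite <- Rpower_pow, Rpower_mult by assumption. f_equal. simpl. field.
Qed.

(* Derivative at 0 of t |-> 2 sqrt(A + B t + C t^2)^(1+al), for A > 0,
   computed with Coquelicot's differentiation tactic (imported locally, since
   Coquelicot's [norm] would shadow the Euclidean norm). *)
Section Calculus.
Import Coquelicot.Coquelicot.

Lemma derive_power_sqrt_quadratic (A B C al : R) : 0 < A ->
  derivable_pt_lim (fun t => 2 * Rpower (sqrt (A + B * t + C * t ^ 2)) (1 + al)) 0
    (2 * (1 + al) * Rpower (sqrt A) al / sqrt A * (B / 2)).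
Proof.
intros HA. apply is_derive_Reals.
assert (Hs : 0 < sqrt A) by (apply sqrt_lt_R0; lra).
assert (HD : is_derive (fun x : R => Rpower x (1 + al)) (sqrt A)
               ((1 + al) * Rpower (sqrt A) (1 + al - 1))).
{ apply is_derive_Reals, derivable_pt_lim_power. lra. }
auto_derive; replace (A + B * 0 + C * (0 * (0 * 1))) with A by ring.
- repeat split; [eexists; exact HD | exact HA].
- rewrite (is_derive_unique _ _ _ HD).
  replace (1 + al - 1) with al by ring. field. lra.
Qed.

End Calculus.

Lemma h_directional_derivative d al y u : 0 < dot d y y ->
  derivable_pt_lim (fun t => h d al (vadd y (vscal t u))) 0
    (2 * (1 + al) * Rpower (norm d y) al / norm d y * dot d y u).
Proof.
intros Hy.
replace (fun t => h d al (vadd y (vscal t u))) with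
  (fun t => 2 * Rpower (sqrt (dot d y y + (2 * dot d y u) * t + dot d u u * t ^ 2)) (1 + al)).
- replace (2 * (1 + al) * Rpower (norm d y) al / norm d y * dot d y u) with
    (2 * (1 + al) * Rpower (sqrt (dot d y y)) al / sqrt (dot d y y) * ((2 * dot d y u) / 2))
    by (unfold norm; field; apply Rgt_not_eq, sqrt_lt_R0, Hy).
  now apply derive_power_sqrt_quadratic.
- apply functional_extensionality. intros t. unfold h, norm. do 3 f_equal.
  rewrite dot_add_l, !dot_add_r, !dot_scal_l, !dot_scal_r, (dot_sym d u y). ring.
Qed.

(* Euler's identity for h: h(y) + grad h(y).(x - y) is the tangent value. *)
Lemma tangent_plane_value d al y x : 0 < dot d y y ->
  h d al y + 2 * (1 + al) * Rpower (norm d y) al / norm d y * dot d y (vsub x y)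
  = tangent_value al (dot d y y) (dot d y x).
Proof.
intros Hy. assert (Hs : 0 < norm d y) by (apply sqrt_lt_R0; exact Hy).
pose proof (exp_pos (al * ln (norm d y))) as HP.
unfold tangent_value, tangent_slope, tangent_offset, h.
rewrite <- norm_sq, !Rpower_sq_half by exact Hs.
unfold Rminus. rewrite dot_sub_r, <- norm_sq, !Rpower_plus, Rpower_Ropp, Rpower_1 by exact Hs.
unfold Rpower in *. field. lra.
Qed.

Lemma Wall_as_sup d N v kappa delta alpha x : 0 < delta ->
  Wall d N v kappa delta alpha x =
  Esup (fun e => exists y, Omega d N v kappa delta y /\
                          e = Fin (tangent_value alpha (dot d y y) (dot d y x))).
Proof.
intros Hdelta. apply Esup_ext. intros e.
assert (Hpos : forall y, Omega d N v kappa delta y -> 0 < dot d y y).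
{ intros y [[Hlo _] _]. rewrite <- norm_sq. nra. }
split.
- intros [y [D [HO [Hd ->]]]]. exists y. split; [exact HO|].
  rewrite <- tangent_plane_value by auto. do 2 f_equal.
  apply (uniqueness_limite _ 0 _ _ Hd). apply h_directional_derivative. auto.
- intros [y [HO ->]]. exists y. eexists. split; [exact HO|].
  split; [apply h_directional_derivative; auto|].
  f_equal. symmetry. apply tangent_plane_value. auto.
Qed.

Lemma not_cone_iff d v kappa j y : 0 < norm d y ->
  ~ cone d v kappa j y <-> Rabs (dot d (v j) y) < kappa * norm d y.
Proof.
intros Hy. unfold cone.
assert (Hnz : ~ is_zero d y) by now apply norm_pos_iff.
assert (Hdiv : Rabs (dot d (v j) y) / norm d y >= kappa <-> kappa * norm d y <= Rabs (dot d (v j) y)).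
{ split; intros H.
  - apply Rge_le in H. apply (Rmult_le_compat_r (norm d y)) in H; [|lra].
    unfold Rdiv in H. rewrite Rmult_assoc, Rinv_l, Rmult_1_r in H; lra.
  - apply Rle_ge, (Rmult_le_reg_r (norm d y)); [exact Hy|].
    unfold Rdiv. rewrite Rmult_assoc, Rinv_l, Rmult_1_r; lra. }
split.
- intros H. apply Rnot_le_lt. intros Hle. apply H. split; [exact Hnz|]. now apply Hdiv.
- intros H [_ Hge]. apply Hdiv in Hge. lra.
Qed.

Lemma norm_bounds_sq d y delta : 0 <= delta ->
  delta <= norm d y <= 1 <-> delta ^ 2 <= dot d y y <= 1.
Proof.
intros Hd. rewrite <- norm_sq. pose proof (norm_nonneg d y). split; intros [H1 H2]; split; nra.
Qed.

Section Decomposition.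
Variables (d N : nat) (v : nat -> nat -> R) (kappa delta : R) (i : nat) (w z : nat -> R).
Hypotheses (Horth : orthonormal d N v) (Hdelta : 0 < delta) (Hi : (i <= N)%nat).
Hypotheses (Hw : in_span d i v w) (Hz : in_perp d i v z) (Hz0 : ~ is_zero d z).
Hypothesis Hzc : forall j, (i < j <= N)%nat -> Rabs (dot d (v j) z) < kappa * norm d z.

(* y = yt + (b/|z|) z lies in Omega, has |y|^2 = a^2 + b^2 and
   y.(w + z) = yt.w + b|z|. *)
Lemma lift_to_Omega a b yt : 0 <= b -> delta ^ 2 <= a ^ 2 + b ^ 2 <= 1 ->
  Omega_tilde d i v kappa a b yt ->
  exists y, Omega d N v kappa delta y /\ dot d y y = a ^ 2 + b ^ 2 /\
            dot d y (vadd w z) = dot d yt w + b * norm d z.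
Proof.
intros Hb Hab [Hspan [Hna Hcone]].
assert (Hnz : 0 < norm d z) by now apply norm_pos_iff.
pose proof (norm_sq d z) as Hzz. pose proof (norm_sq d yt) as Hyy. rewrite Hna in Hyy.
assert (Hytz : dot d yt z = 0) by now apply Hz.
assert (Hwz : dot d w z = 0) by now apply Hz.
set (t := b / norm d z).
assert (Ht : 0 <= t) by (apply Rle_mult_inv_pos; lra).
exists (vadd yt (vscal t z)).
assert (Hsq : dot d (vadd yt (vscal t z)) (vadd yt (vscal t z)) = a ^ 2 + b ^ 2).
{ rewrite pythagoras by (rewrite dot_scal_r; rewrite Hytz; ring).
  rewrite dot_scal_l, dot_scal_r, <- Hzz, <- Hyy. unfold t. field. lra. }
set (s := norm d (vadd yt (vscal t z))).
assert (Hs : s = sqrt (a ^ 2 + b ^ 2)) by (unfold s, norm; now rewrite Hsq).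
assert (Hspos : 0 < s) by (rewrite Hs; apply sqrt_lt_R0; nra).
split; [split|split].
- apply norm_bounds_sq; lra.
- intros j Hj. apply not_cone_iff; [exact Hspos|]. fold s.
  rewrite dot_add_r, dot_scal_r.
  destruct (Compare_dec.le_lt_dec j i) as [Hji|Hji].
  + assert (Hvz : dot d (v j) z = 0) by (apply Hz, basis_in_span; lia).
    rewrite Hvz, Rmult_0_r, Rplus_0_r, Hs. apply Hcone. lia.
  + rewrite (dot_basis_span_high d N v Horth i j yt Hspan) by lia.
    rewrite Rplus_0_l, Rabs_mult, (Rabs_right t) by lra.
    assert (Hbs : b <= s).
    { assert (s * s = a ^ 2 + b ^ 2) by (unfold s; rewrite norm_sq; exact Hsq). nra. }
    specialize (Hzc j ltac:(lia)).
    pose proof (Rabs_pos (dot d (v j) z)).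
    assert (Hkappa : 0 < kappa) by (apply (Rmult_lt_reg_r (norm d z)); nra).
    destruct Hb as [Hb|<-].
    * assert (t * Rabs (dot d (v j) z) < kappa * b).
      { replace (kappa * b) with (t * (kappa * norm d z)) by (unfold t; field; lra).
        apply Rmult_lt_compat_l; [unfold t; apply Rdiv_lt_0_compat|]; lra. }
      nra.
    * unfold t. rewrite Rdiv_0_l. nra.
- exact Hsq.
- rewrite dot_add_r, !dot_add_l, !dot_scal_l, (dot_sym d z w), Hwz, Hytz, <- Hzz.
  unfold t. field. lra.
Qed.

(* For y in Omega, with yt its projection on V_i, a = |yt| and b = |y - yt|:
   yt lies in tilde Omega_{a,b}, |y|^2 = a^2 + b^2, and by Cauchy-Schwarz
   y.(w + z) <= yt.w + b|z|. *)
Lemma project_from_Omega y : Omega d N v kappa delta y ->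
  exists a b yt, 0 <= a /\ 0 <= b /\ dot d y y = a ^ 2 + b ^ 2 /\
    Omega_tilde d i v kappa a b yt /\ dot d y (vadd w z) <= dot d yt w + b * norm d z.
Proof.
intros [Hny Hcone].
set (yt := proj d v i y). set (yp := vsub y yt).
destruct (proj_decomposition d N v Horth i y Hi) as [Hyt Hyp]. fold yt yp in Hyt, Hyp.
assert (Hdec : forall k, (k < d)%nat -> y k = vadd yt yp k)
  by (intros; unfold vadd, yp, vsub; ring).
assert (Hdot : forall u, dot d y u = dot d yt u + dot d yp u)
  by (intros u; rewrite (dot_ext d y (vadd yt yp) u u), dot_add_l by auto; reflexivity).
assert (Hperp : dot d yt yp = 0) by (apply Hyp; exact Hyt).
pose proof (norm_sq d yt). pose proof (norm_sq d yp).
exists (norm d yt), (norm d yp), yt.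
assert (Hsq : dot d y y = norm d yt ^ 2 + norm d yp ^ 2).
{ rewrite (dot_ext d y (vadd yt yp) y (vadd yt yp)), pythagoras by auto. simpl. nra. }
split; [apply norm_nonneg|]. split; [apply norm_nonneg|]. split; [exact Hsq|].
split; [split; [exact Hyt|split; [reflexivity|]]|].
- intros j Hj.
  assert (Hyj : dot d (v j) yt = dot d (v j) y).
  { assert (Hjp : dot d (v j) yp = 0) by (apply Hyp, basis_in_span; lia).
    rewrite (dot_sym d (v j) y), Hdot, (dot_sym d yp), Hjp, dot_sym. ring. }
  rewrite Hyj, <- Hsq. fold (norm d y). apply not_cone_iff.
  + apply sqrt_lt_R0. rewrite <- norm_sq. nra.
  + apply Hcone. lia.
- rewrite Hdot, !dot_add_r, (Hz yt Hyt), (dot_sym d yp w), (Hyp w Hw).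
  pose proof (cauchy_schwarz d yp z). lra.
Qed.

End Decomposition.

(* A tangent value
   at y in Omega is bounded by the (a,b)-term of the right-hand side built
   from the projection of y (project_from_Omega); conversely every candidate
   c (yt.w + b|z|) + k of the (a,b)-term is a tangent value (lift_to_Omega). *)
Theorem mainTheorem3 (d N : nat) (v : nat -> nat -> R) (kappa delta alpha : R)
  (Horth : orthonormal d N v) (Hkappa : 0 < kappa) (Hdelta : 0 < delta < 1)
  (Halpha : 0 < alpha)
  (i : nat) (Hi : (i <= N)%nat) (w z : nat -> R)
  (Hw : in_span d i v w) (Hz : in_perp d i v z) (Hz0 : ~ is_zero d z)
  (Hzc : forall j, (i < j <= N)%nat -> Rabs (dot d (v j) z) < kappa * norm d z) :
  Wall d N v kappa delta alpha (vadd w z) =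
  Esup (fun e => exists a b, 0 <= a /\ 0 <= b /\
          delta ^ 2 <= a ^ 2 + b ^ 2 <= 1 /\
          e = Eadd
                (Emulpos (2 * (1 + alpha) / Rpower (a ^ 2 + b ^ 2) ((1 - alpha) / 2))
                   (Eadd (Esup (img (Omega_tilde d i v kappa a b) (fun y => dot d y w)))
                         (b * norm d z)))
                (- 2 * alpha * Rpower (a ^ 2 + b ^ 2) ((1 + alpha) / 2))).
Proof.
rewrite Wall_as_sup by lra. apply Ele_antisym; apply Esup_least.
- intros e [y [HO ->]].
  destruct (project_from_Omega d N v kappa delta i w z Horth ltac:(lra) Hi Hw Hz y HO)
    as [a [b [yt [Ha [Hb [Hyy [Hyt Hyx]]]]]]].
  assert (Hab : delta ^ 2 <= a ^ 2 + b ^ 2 <= 1)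
    by (rewrite <- Hyy; apply norm_bounds_sq; [lra | apply HO]).
  eapply Ele_trans; [|apply Esup_upper; exists a, b; split; [|split; [|split]]; eauto].
  eapply Ele_trans; [|apply (Esup_affine_upper _ _ _ _ _ yt (tangent_slope_pos _ _ Halpha) Hyt)].
  simpl. unfold tangent_value. rewrite Hyy.
  apply Rplus_le_compat_r, Rmult_le_compat_l; [apply Rlt_le, tangent_slope_pos|]; assumption.
- intros e [a [b [Ha [Hb [Hab ->]]]]].
  apply (Esup_affine_least _ _ _ _ _ _ (tangent_slope_pos _ _ Halpha)).
  intros yt Hyt.
  destruct (lift_to_Omega d N v kappa delta i w z Horth ltac:(lra) Hi Hw Hz Hz0 Hzc a b yt Hb Hab Hyt)
    as [y [HO [Hyy Hyx]]].
  eapply Ele_trans; [|apply Esup_upper; exists y; split; [exact HO|reflexivity]].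
  rewrite Hyy, Hyx. apply Ele_refl.
Qed.
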